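(* Let $a$ be a non-degenerate arrow environment, let $x,y\in\mathbb Z_+$ and $l\ge1$. If the process $Z^+$ on $a$ with initial value $Z^+_0=x$ satisfies $Z^+_l\ge y$, then the process $Z^-$ on the shifted arrow environment $\theta^{l-1}a$ with initial value $Z^-_0=y$ satisfies $Z^-_l\le x$.
   Context: Notation: $\mathbb N=\{1,2,\dots\}$, $\mathbb Z_+=\{0,1,2,\dots\}$. An arrow environment is $a\in\{0,1\}^{\mathbb Z\times\mathbb N}$; for $z\in\mathbb Z$, $(\theta^z a)(x,i)=a(x+z,i)$. A sequence $b\in\{0,1\}^{\mathbb N}$ is non-degenerate if $b(i)\ne b(i+1)$ for infinitely many $i$; $a$ is non-degenerate if every $a(x,\cdot)$ is. For non-degenerate $b$: $U^+_b(0)=0$ and for $x\ge1$, $U^+_b(x)$ is the number of indices $i$ with $b(i)=1$ that precede the $x$-th index $j$ with $b(j)=0$; $U^-_b(x)$ is defined the same way with the roles of $0$ and $1$ exchanged. For non-degenerate $a$ and $y\in\mathbb Z_+$, the processes on $a$ with initial value $y$ are $Z^+_0=y$, $Z^+_n=U^+_{a(n-1,\cdot)}(Z^+_{n-1})$ and $Z^-_0=y$, $Z^-_n=U^-_{a(1-n,\cdot)}(Z^-_{n-1})$ for $n\ge1$. *)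

From Stdlib Require Import Arith ZArith Lia ClassicalEpsilon.

(* A sequence b in {0,1}^N is represented as b : nat -> bool
   (true = 1, false = 0); only indices i >= 1 are meaningful. *)

Fixpoint cnt (p : bool) (b : nat -> bool) (n : nat) : nat :=
  match n with
  | O => O
  | S k => cnt p b k + (if Bool.eqb (b (S k)) p then 1 else 0)
  end.

Definition nondeg (b : nat -> bool) : Prop :=
  forall N : nat, exists i, N <= i /\ 1 <= i /\ b i <> b (S i).

(* the x-th index j >= 1 with b j = p (well defined for non-degenerate b, x >= 1) *)
Definition nth_pos (p : bool) (b : nat -> bool) (x : nat) : nat :=
  epsilon (inhabits 0%nat) (fun j => 1 <= j /\ b j = p /\ cnt p b j = x).

Definition Uplus (b : nat -> bool) (x : nat) : nat :=
  match x with
  | O => O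
  | S _ => cnt true b (nth_pos false b x - 1)
  end.

Definition Uminus (b : nat -> bool) (x : nat) : nat :=
  match x with
  | O => O
  | S _ => cnt false b (nth_pos true b x - 1)
  end.

Definition env := Z -> nat -> bool.

Definition nondeg_env (a : env) : Prop := forall x : Z, nondeg (a x).

Definition theta_shift (z : Z) (a : env) : env := fun x i => a (x + z)%Z i.

Fixpoint Zpproc (a : env) (y : nat) (n : nat) : nat :=
  match n with
  | O => y
  | S k => Uplus (a (Z.of_nat k)) (Zpproc a y k)
  end.

(* Z^-_0 = y, Z^-_n = U^-_{a(1-n,.)}(Z^-_{n-1}); for n = k+1, 1-n = -k *)
Fixpoint Zmproc (a : env) (y : nat) (n : nat) : nat :=
  match n with
  | O => y
  | S k => Uminus (a (- Z.of_nat k)%Z) (Zmproc a y k)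
  end.

From Stdlib Require Import Arith ZArith.
From Stdlib Require Import Lia ClassicalEpsilon.

(* The theorem is an l-fold iteration of a one-column duality:
   for a non-degenerate sequence b,  y <= U^+_b(x)  implies  U^-_b(y) <= x.
   Indeed, if j0 is the (x+1)-th zero and j1 the (y+1)-th one of b, then
   y < y+1 <= #{ones before j0} forces j1 < j0, so the zeros before j1 are
   at most the x zeros before j0.  For the iteration, Z^+ is unfolded at
   its last step (column l-1 of a) while Z^- on theta^{l-1} a is unfolded at
   its first step (the same column); after one application of the duality
   the remaining Z^- process runs on theta^{l-2} a, which gives an induction
   on l with a and x fixed and the starting value y generalized. *)

Lemma cnt_S (p : bool) (b : nat -> bool) (k : nat) :
  cnt p b (S k) = cnt p b k + (if Bool.eqb (b (S k)) p then 1 else 0).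
Proof. reflexivity. Qed.

Lemma cnt_mono (p : bool) (b : nat -> bool) (n m : nat) :
  n <= m -> cnt p b n <= cnt p b m.
Proof. induction 1; [lia | rewrite cnt_S; lia]. Qed.

Lemma cnt_S_hit (p : bool) (b : nat -> bool) (k : nat) :
  b (S k) = p -> cnt p b (S k) = cnt p b k + 1.
Proof. intros Hp. rewrite cnt_S, Hp. destruct p; reflexivity. Qed.

Lemma nondeg_hits (p : bool) (b : nat -> bool) :
  nondeg b -> forall n, exists i, n < i /\ b i = p.
Proof.
  intros Hb n. destruct (Hb (S n)) as [i [Hni [_ Hswitch]]].
  destruct (Bool.bool_dec (b i) p) as [Hi | Hi].
  - exists i. split; [lia | exact Hi].
  - exists (S i). split; [lia |].
    destruct (b i), (b (S i)), p; congruence.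
Qed.

Lemma cnt_unbounded (p : bool) (b : nat -> bool) :
  nondeg b -> forall x, exists n, x <= cnt p b n.
Proof.
  intros Hb x. induction x as [| x [n Hn]].
  - exists 0. lia.
  - destruct (nondeg_hits p b Hb n) as [[| i] [Hni Hi]]; [lia |].
    exists (S i). rewrite cnt_S_hit by exact Hi.
    pose proof (cnt_mono p b n i ltac:(lia)). lia.
Qed.

(* Discrete intermediate value theorem: a count passing level x >= 1 does so
   at an occurrence of p, which is then the x-th one. *)
Lemma cnt_reaches (p : bool) (b : nat -> bool) (x n : nat) :
  1 <= x -> x <= cnt p b n -> exists j, 1 <= j /\ b j = p /\ cnt p b j = x.
Proof.
  intros Hx. induction n as [| k IH]; intros Hn; [simpl in Hn; lia |].
  destruct (le_lt_dec x (cnt p b k)) as [Hk | Hk]; [exact (IH Hk) |].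
  exists (S k). rewrite cnt_S in Hn.
  destruct (Bool.eqb (b (S k)) p) eqn:Hp; [| lia].
  apply Bool.eqb_prop in Hp.
  repeat split; [lia | exact Hp |]. rewrite cnt_S_hit by exact Hp. lia.
Qed.

Lemma nth_pos_spec (p : bool) (b : nat -> bool) (x : nat) :
  nondeg b -> 1 <= x ->
  1 <= nth_pos p b x /\ b (nth_pos p b x) = p /\ cnt p b (nth_pos p b x) = x.
Proof.
  intros Hb Hx. unfold nth_pos. apply epsilon_spec.
  destruct (cnt_unbounded p b Hb x) as [n Hn].
  exact (cnt_reaches p b x n Hx Hn).
Qed.

Lemma Uplus_Uminus_duality (b : nat -> bool) (x y : nat) :
  nondeg b -> y <= Uplus b x -> Uminus b y <= x.
Proof.
  intros Hb Hy. destruct x as [| x]; [simpl in Hy; destruct y; simpl; lia |].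
  destruct y as [| y]; [simpl; lia |].
  unfold Uplus in Hy; unfold Uminus.
  destruct (nth_pos_spec false b (S x) Hb ltac:(lia)) as [Hj0 [Hbj0 Hcnt0]].
  destruct (nth_pos_spec true b (S y) Hb ltac:(lia)) as [Hj1 [Hbj1 Hcnt1]].
  set (j0 := nth_pos false b (S x)) in *.
  set (j1 := nth_pos true b (S y)) in *.
  assert (Hj : j1 < j0).
  { destruct (lt_dec j1 j0) as [Hlt | Hge]; [exact Hlt | exfalso].
    assert (j1 <> j0) by congruence.
    destruct j1 as [| k]; [lia |].
    rewrite cnt_S_hit in Hcnt1 by exact Hbj1.
    pose proof (cnt_mono true b (j0 - 1) k ltac:(lia)). lia. }
  pose proof (cnt_mono false b (j1 - 1) j0 ltac:(lia)). lia.
Qed.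

Lemma theta_shift_col (z : Z) (a : env) (x : Z) : theta_shift z a x = a (x + z)%Z.
Proof. reflexivity. Qed.

Lemma Zmproc_ext (a a' : env) (y n : nat) :
  (forall z, a z = a' z) -> Zmproc a y n = Zmproc a' y n.
Proof. intros Ha. induction n as [| n IH]; simpl; [reflexivity | now rewrite IH, Ha]. Qed.

Lemma Zmproc_first_step (a : env) (y n : nat) :
  Zmproc a y (S n) = Zmproc (theta_shift (-1) a) (Uminus (a 0%Z) y) n.
Proof.
  induction n as [| n IH]; [reflexivity |].
  change (Zmproc a y (S (S n))) with
    (Uminus (a (- Z.of_nat (S n))%Z) (Zmproc a y (S n))).
  rewrite IH. cbn [Zmproc]. rewrite theta_shift_col. do 2 f_equal. lia.
Qed.

Lemma Zproc_duality (a : env) (x : nat) :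
  nondeg_env a -> forall l y,
  y <= Zpproc a x l -> Zmproc (theta_shift (Z.of_nat l - 1) a) y l <= x.
Proof.
  intros Ha l. induction l as [| l IH]; intros y Hy; [exact Hy |].
  rewrite Zmproc_first_step.
  rewrite (Zmproc_ext _ (theta_shift (Z.of_nat l - 1) a))
    by (intros z; rewrite !theta_shift_col; f_equal; lia).
  apply IH.
  replace (theta_shift (Z.of_nat (S l) - 1) a 0%Z) with (a (Z.of_nat l))
    by (rewrite theta_shift_col; f_equal; lia).
  exact (Uplus_Uminus_duality _ _ _ (Ha _) Hy).
Qed.

Theorem lemma2p6 (a : env) (Ha : nondeg_env a) (x y l : nat) (Hl : 1 <= l) :
  y <= Zpproc a x l -> Zmproc (theta_shift ((Z.of_nat l - 1)%Z) a) y l <= x.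
Proof. exact (Zproc_duality a x Ha l y). Qed.
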